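(* As formal power series in $x,y$, $$F(x,y) = \frac{x}{y}\left(\frac{G(y)}{1-F(x,y)} - \frac{G(0)}{1-F(x,0)}\right),$$ where the bracket on the right-hand side vanishes at $y=0$ so the division by $y$ is legitimate. Moreover this equation determines $F$ uniquely.
   Context: Let $\mu$ be a probability law on $\{0,1,2,\dots\}$, $\mu_k=\mu(\{k\})$, $G(t)=\sum_k\mu_kt^k$. Parking rule on a finite rooted tree with car arrival numbers $(a_x)$ at its vertices: each vertex holds at most one car; each car goes to its arrival vertex, parks there if free, otherwise drives towards the root and parks at the first free vertex on its way, and exits through the root if none is found (the final configuration does not depend on the order of the cars). A fully parked tree is a finite rooted plane tree $\mathbf t$ together with nonnegative integers $(a_x)_{x\in\mathbf t}$ (car arrivals) such that in the final configuration every vertex is occupied; its number of outgoing cars is the number of cars exiting through the root. Let $\mathbb T_n^{(k)}$ be the set of fully parked trees with $n$ vertices and $k$ outgoing cars, $w(\mathbf t)=\prod_{x\in\mathbf t}\mu_{a_x}$, and $F(x,y)=\sum_{n\ge1}\sum_{k\ge0}\sum_{\mathbf t\in\mathbb T_n^{(k)}} w(\mathbf t)x^ny^k.$ *)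

From HB Require Import structures.
From mathcomp Require Import all_boot all_order all_algebra.
From mathcomp Require Import all_classical all_reals all_analysis.
Set Implicit Arguments. Unset Strict Implicit. Unset Printing Implicit Defensive.
Import Order.TTheory GRing.Theory Num.Theory.
Local Open Scope ring_scope.
Local Open Scope classical_set_scope.

(* Labelled finite rooted plane trees: [GenTree.Node a ts] is a vertex with
   car-arrival number [a] and ordered list of subtrees [ts]. With leaf labels
   in [void] there are no leaves of the GenTree kind, so every element is a
   Node. *)
Definition lptree := GenTree.tree void.

Fixpoint nverts (t : lptree) : nat :=
  match t with
  | GenTree.Leaf v => match v with end
  | GenTree.Node _ ts => (sumn (map nverts ts)).+1
  end.

(* number of cars leaving the subtree rooted at t through its root:
   cars arriving at the root plus cars flowing in from the children, minus
   the one that parks at the root (if any) *)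
Fixpoint outflow (t : lptree) : nat :=
  match t with
  | GenTree.Leaf v => match v with end
  | GenTree.Node a ts => (a + sumn (map outflow ts)).-1
  end.

(* every vertex is occupied in the final configuration: a vertex is occupied
   iff at least one car arrives at it or flows into it from below *)
Fixpoint fully_parked (t : lptree) : bool :=
  match t with
  | GenTree.Leaf v => match v with end
  | GenTree.Node a ts => (0 < a + sumn (map outflow ts))%N && all fully_parked ts
  end.

Fixpoint weight (R : pzRingType) (mu : nat -> R) (t : lptree) : R :=
  match t with
  | GenTree.Leaf v => match v with end
  | GenTree.Node a ts => mu a * foldr *%R 1 (map (weight mu) ts)
  end.

Definition FPT (n k : nat) : set lptree :=
  [set t | nverts t = n /\ fully_parked t /\ outflow t = k].

(* formal power series in x, y : P n k = coefficient of x^n y^k *)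
Definition ps (R : Type) := nat -> nat -> R.

Section PS.
Variable R : pzRingType.
Definition ps_add (P Q : ps R) : ps R := fun n k => P n k + Q n k.
Definition ps_sub (P Q : ps R) : ps R := fun n k => P n k - Q n k.
Definition ps_scale (c : R) (P : ps R) : ps R := fun n k => c * P n k.
Definition ps_mul (P Q : ps R) : ps R := fun n k =>
  \sum_(i < n.+1) \sum_(j < k.+1) P i j * Q (n - i)%N (k - j)%N.
Definition ps_one : ps R := fun n k => ((n == 0%N) && (k == 0%N))%:R.
Definition ps_X : ps R := fun n k => ((n == 1%N) && (k == 0%N))%:R.
Definition ps_at_y0 (P : ps R) : ps R := fun n k => if k == 0%N then P n 0%N else 0.
(* P/y, legitimate when all coefficients of y^0 vanish *)
Definition ps_divY (P : ps R) : ps R := fun n k => P n k.+1.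
Definition ps_of_y (g : nat -> R) : ps R := fun n k => if n == 0%N then g k else 0.


End PS.
Arguments ps_one {R}.
Arguments ps_X {R}.

Definition Fgen (R : realType) (mu : nat -> R) : ps R :=
  fun n k => \sum_(t \in FPT n k) weight mu t.

(* P satisfies  P = x/y ( G(y)/(1-P(x,y)) - G(0)/(1-P(x,0)) ), the bracket
   vanishing at y = 0; the two inverses are inverses in R[[x,y]]. *)
Definition satisfies_eqn (R : realType) (mu : nat -> R) (P : ps R) : Prop :=
  exists Q Q0 : ps R,
    ps_mul (ps_sub ps_one P) Q = ps_one /\
    ps_mul (ps_sub ps_one (ps_at_y0 P)) Q0 = ps_one /\
    let B := ps_sub (ps_mul (ps_of_y mu) Q) (ps_scale (mu 0%N) Q0) in
    (forall n, B n 0%N = 0) /\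
    P = ps_mul ps_X (ps_divY B).

From HB Require Import structures.
From mathcomp Require Import all_boot all_order all_algebra.
From mathcomp Require Import all_classical all_reals all_analysis.
From mathcomp Require Import zify.
Import Order.TTheory GRing.Theory Num.Theory.
Import numFieldNormedType.Exports.
Local Open Scope classical_set_scope.
Set Implicit Arguments.
Unset Strict Implicit.
Unset Printing Implicit Defensive.

(* A fully parked tree with n + 1 vertices and k outgoing cars is a root at
   which a cars arrive, together with the ordered forest of its subtrees; this
   forest is fully parked, has n vertices and k + 1 - a outgoing cars in total,
   since every car reaching the root leaves except the one parking there.
   Forests are sequences of trees, so their generating function S satisfies
   S = 1 + F S, i.e. S = 1/(1 - F), and the decomposition at the root reads
   [x^(n+1) y^k] F = sum_(a <= k+1) mu_a [x^n y^(k+1-a)] S, the coefficient of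
   x^(n+1) y^k in x/y (G(y) S(x,y) - G(0) S(x,0)).  Conversely the equation
   expresses the coefficients of x^(n+1) in F through those of x^i, i <= n, so
   it has at most one solution. *)

Lemma lptree_ind (P : lptree -> Prop) :
  (forall a ts, (forall t, t \in ts -> P t) -> P (GenTree.Node a ts)) ->
  forall t, P t.
Proof.
move=> IHnode; fix IH 1 => -[[]|a ts]; apply: IHnode.
elim: ts => [|t ts IHts] s; rewrite inE; first discriminate.
case/predU1P => [->|]; [exact: IH | exact: IHts].
Qed.

Fixpoint ncars (t : lptree) : nat :=
  match t with
  | GenTree.Leaf v => match v with end
  | GenTree.Node a ts => a + sumn (map ncars ts)
  end.

Definition forest_size (f : seq lptree) := sumn (map nverts f).
Definition forest_outflow (f : seq lptree) := sumn (map outflow f).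
Definition forest_cars (f : seq lptree) := sumn (map ncars f).

Lemma sumn_mapD_in (T : eqType) (g h1 h2 : T -> nat) (s : seq T) :
  {in s, forall x, g x = h1 x + h2 x} ->
  sumn (map g s) = sumn (map h1 s) + sumn (map h2 s).
Proof.
elim: s => //= x s IHs eq_gh; rewrite eq_gh ?mem_head // IHs; first lia.
by move=> y ys; apply: eq_gh; rewrite inE ys orbT.
Qed.

Lemma ncars_parked t : fully_parked t -> ncars t = nverts t + outflow t.
Proof.
elim/lptree_ind: t => a ts IHts /= /andP[in_pos /allP ts_parked].
have cars_ts : forest_cars ts = forest_size ts + forest_outflow ts.
  by apply: sumn_mapD_in => t t_in; exact: IHts t_in (ts_parked t t_in).
rewrite -/(forest_outflow ts) in in_pos.
rewrite -/(forest_cars ts) -/(forest_size ts) -/(forest_outflow ts) cars_ts; lia.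
Qed.

Lemma forest_cars_parked f :
  all fully_parked f -> forest_cars f = forest_size f + forest_outflow f.
Proof.
move=> /allP f_parked; apply: sumn_mapD_in => t t_in.
exact: ncars_parked (f_parked t t_in).
Qed.

(* A finite superset of the fully parked forests of a given size, needed to
   turn the finitely supported sum [Fgen] into a sum over a list. *)
Fixpoint forest_enum (B n : nat) : seq (seq lptree) :=
  [::] :: if n is n'.+1 then
    [seq t :: r | t <- [seq GenTree.Node a ts | a <- index_iota 0 B.+1,
                                                 ts <- forest_enum B n'],
                  r <- forest_enum B n']
  else [::].

Lemma forest_enum_complete B n f :
  forest_size f <= n -> forest_cars f <= B -> f \in forest_enum B n.
Proof.
rewrite /forest_size /forest_cars.
elim: n f => [|n IHn] [|[[]|a ts] r] // size_f cars_f; rewrite /= in size_f cars_f.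
cbn [forest_enum]; rewrite in_cons; apply/orP; right; apply/allpairsP.
exists (GenTree.Node a ts, r); split=> //; last by apply: IHn; rewrite /=; lia.
apply/allpairsP; exists (a, ts); split=> //; last by apply: IHn; rewrite /=; lia.
by rewrite mem_index_iota /=; lia.
Qed.

Definition parked_forest n k (f : seq lptree) :=
  [&& all fully_parked f, forest_size f == n & forest_outflow f == k].

Definition parked_tree n k (t : lptree) :=
  [&& fully_parked t, nverts t == n & outflow t == k].

Definition parked_forests n k : seq (seq lptree) :=
  undup [seq f <- forest_enum (n + k) n | parked_forest n k f].

Definition parked_trees n k : seq lptree :=
  undup [seq t <- flatten (forest_enum (n + k) n) | parked_tree n k t].

Lemma mem_parked_forests n k f : (f \in parked_forests n k) = parked_forest n k f.
Proof.
rewrite mem_undup mem_filter andb_idr // => /and3P[f_parked /eqP size_f /eqP out_f].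
apply: forest_enum_complete; first lia.
by rewrite forest_cars_parked //; lia.
Qed.

Lemma mem_parked_trees n k t : (t \in parked_trees n k) = parked_tree n k t.
Proof.
rewrite mem_undup mem_filter andb_idr // => /and3P[t_parked /eqP size_t /eqP out_t].
apply/flattenP; exists [:: t]; last exact: mem_head.
by apply: forest_enum_complete; rewrite /forest_size /forest_cars /= ?ncars_parked //; lia.
Qed.

Lemma FPT_parked_trees n k : FPT n k = [set` parked_trees n k].
Proof.
apply/seteqP; split=> t; rewrite /FPT /= mem_parked_trees /parked_tree.
- by move=> [-> [-> ->]]; rewrite !eqxx.
- by move=> /and3P[-> /eqP -> /eqP ->].
Qed.

Lemma perm_parked_trees_root m k :
  perm_eq (parked_trees m.+1 k)
    [seq GenTree.Node a ts | a <- index_iota 0 k.+2,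
                             ts <- parked_forests m (k.+1 - a)].
Proof.
apply: uniq_perm; first exact: undup_uniq.
  apply: allpairs_uniq_dep; first exact: iota_uniq.
    by move=> a _; exact: undup_uniq.
  by move=> [a ts] [a' ts'] _ _ /= [-> ->].
move=> t; rewrite mem_parked_trees; apply/idP/allpairsPdep.
- case: t => [[]|a ts]; rewrite /parked_tree /= -/(forest_size ts) -/(forest_outflow ts).
  case/and3P=> /andP[in_pos ts_parked] /eqP size_t /eqP out_t.
  exists a, ts; rewrite mem_index_iota mem_parked_forests /parked_forest ts_parked.
  by split=> //; [lia | apply/andP; split; apply/eqP; lia].
- case=> a [ts [+ + ->]]; rewrite mem_index_iota mem_parked_forests.
  move=> a_lt /and3P[ts_parked /eqP size_ts /eqP out_ts].
  rewrite /forest_size /forest_outflow in size_ts out_ts.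
  by rewrite /parked_tree /= ts_parked andbT; apply/and3P; split; try apply/eqP; lia.
Qed.

Definition parked_forests_cons n k : seq (seq lptree) :=
  [seq tr.1 :: tr.2 | ij <- [seq (i, j) | i <- index_iota 0 n.+1,
                                         j <- index_iota 0 k.+1],
                      tr <- [seq (t, r) | t <- parked_trees ij.1 ij.2,
                                          r <- parked_forests (n - ij.1) (k - ij.2)]].

Lemma mem_parked_forests_cons n k t r :
  (t :: r \in parked_forests_cons n k) = parked_forest n k (t :: r).
Proof.
rewrite /parked_forest /forest_size /forest_outflow /=.
apply/allpairsPdep/idP.
- case=> _ [_ [/allpairsP[[i j] [/= + + ->]] /allpairsP[[t' r'] [/= + + ->]] [-> ->]]].
  rewrite !mem_index_iota mem_parked_trees mem_parked_forests.
  move=> i_lt j_lt /and3P[-> /eqP size_t /eqP out_t] /and3P[r_parked /eqP + /eqP].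
  rewrite /forest_size /forest_outflow r_parked => size_r out_r.
  by apply/andP; split; apply/eqP; lia.
- move=> /and3P[/andP[t_parked r_parked] /eqP size_tr /eqP out_tr].
  exists (nverts t, outflow t), (t, r); split=> //.
    by apply/allpairsP; exists (nverts t, outflow t); rewrite !mem_index_iota; split=> //=; lia.
  apply/allpairsP; exists (t, r); split=> //=.
    by rewrite mem_parked_trees /parked_tree t_parked !eqxx.
  rewrite mem_parked_forests /parked_forest /forest_size /forest_outflow r_parked.
  by apply/andP; split; apply/eqP; lia.
Qed.

Lemma parked_forests_cons_uniq n k : uniq (parked_forests_cons n k).
Proof.
apply: allpairs_uniq_dep.
- apply: allpairs_uniq; [exact: iota_uniq | exact: iota_uniq |].
  by move=> [? ?] [? ?] _ _ /= ->.
- move=> ij _; apply: allpairs_uniq; [exact: undup_uniq | exact: undup_uniq |].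
  by move=> [? ?] [? ?] _ _ /= ->.
have stats_t t ij : t \in parked_trees ij.1 ij.2 -> ij = (nverts t, outflow t).
  by case: ij => i j; rewrite mem_parked_trees => /and3P[_ /eqP -> /eqP ->].
move=> p p' /allpairsPdep[ij [_ [_ /allpairsP[[t r] [/= t_in _ ->]] ->]]].
move=> /allpairsPdep[ij' [_ [_ /allpairsP[[t' r'] [/= t_in' _ ->]] ->]]].
move=> /= [eq_t eq_r]; subst t' r'.
by rewrite (stats_t _ _ t_in) (stats_t _ _ t_in').
Qed.

Lemma perm_parked_forests n k :
  perm_eq (parked_forests n k)
    ((if (n == 0) && (k == 0) then [:: [::]] else [::]) ++ parked_forests_cons n k).
Proof.
have nil_notin : [::] \notin parked_forests_cons n k.
  by apply/negP => /allpairsPdep[? [? [_ _ []]]].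
apply: uniq_perm; first exact: undup_uniq.
  rewrite cat_uniq parked_forests_cons_uniq andbT.
  case: ((n == 0) && (k == 0)) => //=; apply/hasPn => f f_in; rewrite inE //.
  by apply: contraNneq nil_notin => <-.
move=> [|t r]; rewrite mem_cat mem_parked_forests.
- rewrite (negbTE nil_notin) orbF /parked_forest /forest_size /forest_outflow /=.
  by case: n k nil_notin => [|n] [|k].
- by rewrite mem_parked_forests_cons; case: ((n == 0) && (k == 0)).
Qed.

Local Open Scope ring_scope.

Section PowerSeries.
Variable R : pzRingType.
Implicit Types (P Q D : ps R) (g : nat -> R).

Lemma ps_mul1l P : ps_mul ps_one P = P.
Proof.
apply/funext => n; apply/funext => k; rewrite /ps_mul big_ord_recl.
rewrite [X in _ + X]big1 ?addr0 => [|i _]; last first.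
  by apply: big1 => j _; rewrite /ps_one lift0 /= mul0r.
rewrite big_ord_recl [X in _ + X]big1 ?addr0 => [|j _]; last first.
  by rewrite /ps_one lift0 /= mul0r.
by rewrite /ps_one /= mul1r !subn0.
Qed.

Lemma ps_mulBl P1 P2 Q :
  ps_mul (ps_sub P1 P2) Q = ps_sub (ps_mul P1 Q) (ps_mul P2 Q).
Proof.
apply/funext => n; apply/funext => k; rewrite /ps_mul /ps_sub -sumrB.
by apply: eq_bigr => i _; rewrite -sumrB; apply: eq_bigr => j _; exact: mulrBl.
Qed.

Lemma ps_mulXl D n k : ps_mul ps_X D n k = if n is m.+1 then D m k else 0.
Proof.
rewrite /ps_mul; case: n => [|m].
  by rewrite big_ord1; apply: big1 => j _; rewrite /ps_X /= mul0r.
rewrite big_ord_recl [X in X + _]big1 ?add0r => [|j _]; last first.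
  by rewrite /ps_X /= mul0r.
rewrite big_ord_recl [X in _ + X]big1 ?addr0 => [|i _]; last first.
  by apply: big1 => j _; rewrite /ps_X !lift0 /= mul0r.
rewrite big_ord_recl [X in _ + X]big1 ?addr0 => [|j _]; last first.
  by rewrite /ps_X !lift0 /= mul0r.
by rewrite /ps_X lift0 /= mul1r subn0 subSS subn0.
Qed.

Lemma ps_mulXA D Q : ps_mul (ps_mul ps_X D) Q = ps_mul ps_X (ps_mul D Q).
Proof.
apply/funext => n; apply/funext => k; rewrite ps_mulXl {1}/ps_mul.
case: n => [|m].
  by rewrite big_ord1; apply: big1 => j _; rewrite ps_mulXl mul0r.
rewrite big_ord_recl [X in X + _]big1 ?add0r => [|j _]; last first.
  by rewrite ps_mulXl mul0r.
by apply: eq_bigr => i _; apply: eq_bigr => j _; rewrite lift0 ps_mulXl subSS.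
Qed.

Lemma ps_mul_of_yl g Q n k :
  ps_mul (ps_of_y g) Q n k = \sum_(j < k.+1) g j * Q n (k - j)%N.
Proof.
rewrite /ps_mul big_ord_recl [X in _ + X]big1 ?addr0 => [|i _]; last first.
  by apply: big1 => j _; rewrite /ps_of_y lift0 /= mul0r.
by rewrite subn0.
Qed.

Lemma ps_at_y0_one : ps_at_y0 ps_one = ps_one :> ps R.
Proof. by apply/funext => n; apply/funext => -[|k]; rewrite /ps_at_y0 /ps_one ?andbF. Qed.

Lemma ps_at_y0_sub P Q : ps_at_y0 (ps_sub P Q) = ps_sub (ps_at_y0 P) (ps_at_y0 Q).
Proof.
by apply/funext => n; apply/funext => k; rewrite /ps_at_y0 /ps_sub; case: ifP; rewrite ?subr0.
Qed.

Lemma ps_at_y0_mul P Q : ps_at_y0 (ps_mul P Q) = ps_mul (ps_at_y0 P) (ps_at_y0 Q).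
Proof.
apply/funext => n; apply/funext => -[|k]; rewrite /ps_at_y0 /ps_mul /=.
  by apply: eq_bigr => i _; rewrite !big_ord1.
symmetry; apply: big1 => i _; apply: big1 => -[[|j] ?] _ /=.
  by rewrite mulr0.
by rewrite mul0r.
Qed.

Lemma ps_at_y0_mulX D : ps_at_y0 (ps_mul ps_X D) = ps_mul ps_X (ps_at_y0 D).
Proof.
apply/funext => n; apply/funext => k; rewrite /ps_at_y0 !ps_mulXl.
by case: n => [|n]; case: ifP.
Qed.

Lemma ps_inv_mulX D Q : ps_mul (ps_sub ps_one (ps_mul ps_X D)) Q = ps_one ->
  forall n k, Q n k = ps_one n k + ps_mul ps_X (ps_mul D Q) n k.
Proof.
move=> inv n k; have := congr1 (fun P => P n k) inv.
by rewrite ps_mulBl ps_mul1l ps_mulXA /ps_sub => <-; rewrite subrK.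
Qed.

Definition ps_eq_below n P Q := forall i k, (i < n)%N -> P i k = Q i k.

Lemma ps_eq_below_at_y0 n P Q :
  ps_eq_below n P Q -> ps_eq_below n (ps_at_y0 P) (ps_at_y0 Q).
Proof. by move=> eqPQ i k lt_in; rewrite /ps_at_y0 eqPQ. Qed.

Lemma ps_mul_eq_below n P1 P2 Q1 Q2 :
  ps_eq_below n P1 P2 -> ps_eq_below n Q1 Q2 ->
  ps_eq_below n (ps_mul P1 Q1) (ps_mul P2 Q2).
Proof.
move=> eqP eqQ m k lt_mn; apply: eq_bigr => i _; apply: eq_bigr => j _.
rewrite eqP ?eqQ //; [exact: leq_ltn_trans (leq_subr i m) lt_mn |].
exact: leq_ltn_trans (leq_ord i) lt_mn.
Qed.

(* The factor x shifts rows: Q = 1 + x D Q. *)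
Lemma ps_inv_mulX_eq_below n D1 D2 Q1 Q2 :
  ps_mul (ps_sub ps_one (ps_mul ps_X D1)) Q1 = ps_one ->
  ps_mul (ps_sub ps_one (ps_mul ps_X D2)) Q2 = ps_one ->
  ps_eq_below n D1 D2 -> ps_eq_below n Q1 Q2 -> ps_eq_below n.+1 Q1 Q2.
Proof.
move=> /ps_inv_mulX inv1 /ps_inv_mulX inv2 eqD eqQ i k lt_in.
rewrite inv1 inv2 !ps_mulXl; case: i lt_in => // m lt_mn.
by congr (_ + _); exact: ps_mul_eq_below eqD eqQ m k lt_mn.
Qed.

End PowerSeries.

Section Trees.
Variables (R : realType) (mu : nat -> R).

Definition forest_gen : ps R := fun n k =>
  \sum_(f <- parked_forests n k) \prod_(t <- f) weight mu t.

Lemma weight_node a ts :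
  weight mu (GenTree.Node a ts) = mu a * \prod_(t <- ts) weight mu t.
Proof. by rewrite /= foldrE big_map. Qed.

Lemma Fgen_trees n k : Fgen mu n k = \sum_(t <- parked_trees n k) weight mu t.
Proof. by rewrite /Fgen FPT_parked_trees -fsbig_seq //; exact: undup_uniq. Qed.

Lemma Fgen0 k : Fgen mu 0 k = 0.
Proof. by rewrite Fgen_trees big_nil. Qed.

Lemma Fgen_root m k :
  Fgen mu m.+1 k = \sum_(a < k.+2) mu a * forest_gen m (k.+1 - a)%N.
Proof.
rewrite Fgen_trees (perm_big _ (perm_parked_trees_root m k)) big_allpairs_dep.
rewrite big_mkord; apply: eq_bigr => a _; rewrite big_distrr.
by apply: eq_bigr => ts _; exact: weight_node.
Qed.

Lemma forest_gen_cons n k :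
  forest_gen n k = ps_one n k + ps_mul (Fgen mu) forest_gen n k.
Proof.
rewrite /forest_gen (perm_big _ (perm_parked_forests n k)) big_cat /=.
congr (_ + _).
  by rewrite /ps_one; case: ((n == 0)%N && (k == 0)%N); rewrite ?big_cons !big_nil ?addr0.
rewrite big_allpairs_dep big_allpairs big_mkord; apply: eq_bigr => i _.
rewrite big_mkord; apply: eq_bigr => j _.
rewrite big_allpairs Fgen_trees big_distrl; apply: eq_bigr => t _.
by rewrite big_distrr; apply: eq_bigr => r _; rewrite big_cons.
Qed.

Lemma forest_gen_inv : ps_mul (ps_sub ps_one (Fgen mu)) forest_gen = ps_one.
Proof.
apply/funext => n; apply/funext => k.
by rewrite ps_mulBl ps_mul1l /ps_sub forest_gen_cons addrK.
Qed.

Lemma Fgen_satisfies_eqn : satisfies_eqn mu (Fgen mu).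
Proof.
exists forest_gen, (ps_at_y0 forest_gen); split; first exact: forest_gen_inv.
split; first
  by rewrite -{1}ps_at_y0_one -ps_at_y0_sub -ps_at_y0_mul forest_gen_inv ps_at_y0_one.
rewrite /=; split=> [n|].
  by rewrite /ps_sub ps_mul_of_yl big_ord1 /ps_scale /ps_at_y0 subrr.
apply/funext => n; apply/funext => k; rewrite ps_mulXl.
case: n => [|m]; first exact: Fgen0.
by rewrite /ps_divY /ps_sub /ps_scale /ps_at_y0 /= mulr0 subr0 ps_mul_of_yl Fgen_root.
Qed.

End Trees.

Lemma satisfies_eqn_unique (R : realType) (mu : nat -> R) (P1 P2 : ps R) :
  satisfies_eqn mu P1 -> satisfies_eqn mu P2 -> P1 = P2.
Proof.
move=> [Q1 [Q01 [inv1 [inv01 /= [_ P1E]]]]] [Q2 [Q02 [inv2 [inv02 /= [_ P2E]]]]].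
subst P1 P2; rewrite ps_at_y0_mulX in inv01; rewrite ps_at_y0_mulX in inv02.
set D1 := ps_divY (ps_sub _ (ps_scale _ Q01)) in inv1 inv01 *.
set D2 := ps_divY (ps_sub _ (ps_scale _ Q02)) in inv2 inv02 *.
suff eq_below : forall n,
    [/\ ps_eq_below n D1 D2, ps_eq_below n Q1 Q2 & ps_eq_below n Q01 Q02].
  congr (ps_mul ps_X _); apply/funext => i; apply/funext => k.
  by case: (eq_below i.+1) => + _ _; apply.
elim=> [|n [eqD eqQ eqQ0]]; first by split.
have eqQ' := ps_inv_mulX_eq_below inv1 inv2 eqD eqQ.
have eqQ0' := ps_inv_mulX_eq_below inv01 inv02 (ps_eq_below_at_y0 eqD) eqQ0.
split=> // i k lt_in; rewrite /D1 /D2 /ps_divY /ps_sub /ps_scale eqQ0' //.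
by congr (_ - _); exact: ps_mul_eq_below (fun _ _ _ => erefl) eqQ' i k.+1 lt_in.
Qed.

Theorem mainTheorem5 (R : realType) (mu : nat -> R)
  (mu_ge0 : forall k, 0 <= mu k)
  (mu_sum1 : (fun N : nat => \sum_(k < N) mu k) @ \oo --> (1 : R)) :
  satisfies_eqn mu (Fgen mu) /\
  (forall P : ps R, satisfies_eqn mu P -> P = Fgen mu).
Proof.
(* The identity is formal: it holds for arbitrary weights [mu]. *)
split; first exact: Fgen_satisfies_eqn.
by move=> P /satisfies_eqn_unique; apply; exact: Fgen_satisfies_eqn.
Qed.
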